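(* Let $L$ be a non-abelian finite group. Then every non-abelian subgroup $H$ of $L$ satisfies $C_L(H)\le H$ if and only if every maximal subgroup $M$ of $L$ has the property that each non-abelian subgroup $H$ of $M$ satisfies $C_M(H)\le H$, and $Z(L)\le\Phi(L)$.
   Context: $C_L(H)$ denotes the centralizer, $Z(L)$ the center and $\Phi(L)$ the Frattini subgroup of $L$. *)

From mathcomp Require Import all_boot all_fingroup all_solvable.
Set Implicit Arguments. Unset Strict Implicit. Unset Printing Implicit Defensive.
Local Open Scope group_scope.

Definition nonab_selfcent (gT : finGroupType) (G : {set gT}) : Prop :=
  forall H : {group gT}, H \subset G -> ~~ abelian H -> 'C_G(H) \subset H.

From mathcomp Require Import all_boot all_fingroup all_solvable.
Set Implicit Arguments. Unset Strict Implicit. Unset Printing Implicit Defensive.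
Local Open Scope group_scope.

(* If C_L(H) <= H for every non-abelian H <= L, then a maximal M not containing
   Z(L) would give L = M Z(L), forcing M to be non-abelian with Z(L) <= C_L(M) <= M;
   so Z(L) <= Phi(L).  Conversely, for x in C_L(H) either <H, x> lies in a maximal
   subgroup M, where C_M(H) <= H applies, or <H, x> = L, in which case x is central,
   hence in Phi(L) and thus in every maximal subgroup containing H. *)

Section NonAbelianSelfCentralizing.

Variable gT : finGroupType.
Implicit Types G H L M : {group gT}.

Lemma nonab_selfcentS G H : H \subset G -> nonab_selfcent G -> nonab_selfcent H.
Proof.
move=> sHG scG K sKH nabK.
by apply: subset_trans (scG K (subset_trans sKH sHG) nabK); apply: setSI.
Qed.

Lemma maximal_joinG G M (A : {set gT}) :
  maximal M G -> A \subset G -> ~~ (A \subset M) -> M <*> A = G.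
Proof.
case/maxgroupP=> /proper_sub sMG maxM sAG nsAM.
have sMAG : M <*> A \subset G by rewrite join_subG sMG.
have [//|neqMAG] := eqVneq (M <*> A) (G : {set gT}).
have eqMA := maxM (M <*> A)%G; rewrite /= properEneq neqMAG sMAG joing_subl in eqMA.
by case/negP: nsAM; rewrite -(eqMA isT isT) joing_subr.
Qed.

Lemma nonab_selfcent_center_sub_max L M :
  ~~ abelian L -> nonab_selfcent L -> maximal M L -> 'Z(L) \subset M.
Proof.
move=> nabL scL maxM; apply/idPn=> nsZM.
have sML : M \subset L := proper_sub (maxgroupp maxM).
have defL := maximal_joinG maxM (center_sub L) nsZM.
have cMZ : 'Z(L) \subset 'C(M) by apply: subset_trans (subsetIr L 'C(L)) (centS sML).
have nabM : ~~ abelian M.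
  by apply: contra nabL => abM; rewrite -defL abelianY abM center_abelian cMZ.
have sZCM : 'Z(L) \subset 'C_L(M) by rewrite subsetI center_sub cMZ.
by rewrite (subset_trans sZCM (scL M sML nabM)) in nsZM.
Qed.

Lemma nonab_selfcent_center_sub_Phi L :
  ~~ abelian L -> nonab_selfcent L -> 'Z(L) \subset 'Phi(L).
Proof.
move=> nabL scL; apply/bigcapsP=> M /orP[/eqP-> | maxM]; first exact: center_sub.
exact: nonab_selfcent_center_sub_max.
Qed.

Lemma maximal_cover_cent_elem L H x :
  'Z(L) \subset 'Phi(L) -> H \proper L -> x \in 'C_L(H) ->
  exists2 M : {group gT}, maximal M L & (H \subset M) && (x \in M).
Proof.
move=> sZPhi ltHL /setIP[xL cHx]; have sHL := proper_sub ltHL.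
have sHxL : H <*> <[x]> \subset L by rewrite join_subG sHL cycle_subG.
have [defL | [M maxM sHxM]] := maximal_exists sHxL; last first.
  by exists M; rewrite // -cycle_subG -join_subG.
have xZ : x \in 'Z(L).
  by rewrite inE xL -defL centY inE cHx cent_cycle cent1id.
have [eqHL | [M maxM sHM]] := maximal_exists sHL.
  by rewrite eqHL properxx in ltHL.
by exists M; rewrite // sHM (subsetP (Phi_sub_max maxM)) ?(subsetP sZPhi).
Qed.

End NonAbelianSelfCentralizing.

Theorem corollary6p3 (gT : finGroupType) (L : {group gT}) :
  ~~ abelian L ->
  (nonab_selfcent L <->
   ((forall M : {group gT}, maximal M L -> nonab_selfcent M)
    /\ 'Z(L) \subset 'Phi(L))).
Proof.
move=> nabL; split=> [scL | [scM sZPhi] H sHL nabH].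
  split; last exact: nonab_selfcent_center_sub_Phi.
  by move=> M /maxgroupp/proper_sub sML; apply: nonab_selfcentS scL.
apply/subsetP=> x cHx; have [eqHL | ltHL] := eqVproper sHL.
  by rewrite eqHL; case/setIP: cHx.
have [M maxM /andP[sHM xM]] := maximal_cover_cent_elem sZPhi ltHL cHx.
apply: (subsetP (scM M maxM H sHM nabH)).
by rewrite inE xM; case/setIP: cHx.
Qed.
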